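(* Let $k\ge1$. The Hamming weight enumerator of the linear simplex $\alpha$ code $\mathcal{S}_k^{\alpha}$ (of length $q^{sk}$) is $$W_{\mathcal{S}_k^{\alpha}}(X,Y)=\sum_{j=0}^{s-1}A_{w_j}X^{q^{sk}-w_j}Y^{w_j}+X^{q^{sk}},$$ where $w_j=q^{sk}-q^{s(k-1)+j}$ and $A_{w_j}=q^{k(s-j)}-q^{k((s-j)-1)}$.
   Context: Let $R$ be a finite commutative chain ring: a finite commutative ring with $1\neq0$ whose ideals form a single chain under inclusion. Its unique maximal ideal is principal, generated by some $\gamma$; let $s\ge1$ be the least integer with $\gamma^s=0$ (nilpotency index). The residue field $R/\langle\gamma\rangle$ is isomorphic to $\mathbb{F}_q$, $q$ a prime power. Fix a set $T=\{e_0,\dots,e_{q-1}\}\subseteq R$ of coset representatives of $R/\langle\gamma\rangle$ with $e_0=0$, $e_1=1$, totally ordered by $e_0<e_1<\dots<e_{q-1}$. Every $r\in R$ has a unique representation $r=\sum_{i=0}^{s-1}r_i\gamma^i$ with $r_i\in T$. Order $R$ by: $x>y$ iff $x_i>y_i$ in $T$ for the largest index $i$ with $x_i\neq y_i$ (where $x_i,y_i$ are the digits of $x,y$). List $R=\{\rho_0,\rho_1,\dots,\rho_{q^s-1}\}$ in increasing order (so $\rho_0=0,\rho_1=1$). For $a\in R$ and $m\ge1$, $\mathbf{a}^{(m)}$ denotes the constant vector $(a,\dots,a)\in R^m$. Define matrices $G_k^\alpha$ recursively: $G_1^\alpha=(\rho_0\ \rho_1\ \cdots\ \rho_{q^s-1})$,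 and for $k>1$, $G_k^\alpha$ is the $k\times q^{sk}$ matrix consisting of $q^s$ column blocks, where the $j$-th block ($j=0,\dots,q^s-1$) has first row $\boldsymbol{\rho_j}^{(q^{s(k-1)})}$ and, below it, a copy of $G_{k-1}^\alpha$. The linear simplex $\alpha$ code $\mathcal{S}_k^\alpha$ is the $R$-submodule of $R^{q^{sk}}$ generated by the rows of $G_k^\alpha$. The Hamming weight of $x\in R^n$ is the number of nonzero coordinates; the Hamming weight enumerator of a code $\mathcal{C}$ of length $n$ is $\sum_i A_iX^{n-i}Y^i$ where $A_i$ is the number of codewords of Hamming weight $i$. *)

From HB Require Import structures.
From mathcomp Require Import all_boot all_order all_algebra.
Set Implicit Arguments. Unset Strict Implicit. Unset Printing Implicit Defensive.
Import Order.TTheory GRing.Theory Num.Theory.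
Local Open Scope ring_scope.

Section ChainRing.
Variable R : finComNzRingType.

Definition is_ideal (I : {set R}) : Prop :=
  [/\ 0 \in I, (forall x y, x \in I -> y \in I -> x + y \in I)
    & (forall r x, x \in I -> r * x \in I)].

Definition chain_ring : Prop :=
  forall I J : {set R}, is_ideal I -> is_ideal J -> (I \subset J) \/ (J \subset I).

Definition maximal_ideal (M : {set R}) : Prop :=
  [/\ is_ideal M, M != [set: R] &
      forall J : {set R}, is_ideal J -> M \subset J -> J = M \/ J = [set: R]].

Definition pideal (g : R) : {set R} := [set x | [exists r : R, x == r * g]].

(* rho c = c-th element of R in increasing order, for c < q^s:
   the element whose gamma-adic digits are e_(c_i), c = sum_i c_i q^i *)
Definition rho (g : R) (s q : nat) (e : nat -> R) (c : nat) : R :=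
  \sum_(i < s) e ((c %/ q ^ i) %% q)%N * g ^+ i.

Fixpoint Gfun (g : R) (s q : nat) (e : nat -> R) (k r c : nat) : R :=
  match k with
  | 0 => 0
  | 1 => rho g s q e c
  | k'.+1 =>
      match r with
      | 0 => rho g s q e (c %/ q ^ (s * k'))%N
      | r'.+1 => Gfun g s q e k' r' (c %% q ^ (s * k'))%N
      end
  end.

Definition Gmat (g : R) (s q : nat) (e : nat -> R) (k : nat)
  : 'M[R]_(k, q ^ (s * k)) :=
  \matrix_(i < k, j < q ^ (s * k)) Gfun g s q e k i j.

Definition simplex_alpha (g : R) (s q : nat) (e : nat -> R) (k : nat)
  : {set 'rV[R]_(q ^ (s * k))} :=
  [set v | [exists u : 'rV[R]_k, v == u *m Gmat g s q e k]].

End ChainRing.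

Definition hweight (R : finComNzRingType) (n : nat) (v : 'rV[R]_n) : nat :=
  #|[set j : 'I_n | v 0 j != 0]|.

(* Hamming weight enumerator sum_i A_i X^(n-i) Y^i in Z[X,Y] = {poly {poly int}},
   X := ('X)%:P (outer constant), Y := 'X (outer variable) *)
Definition PX : {poly {poly int}} := ('X)%:P.
Definition PY : {poly {poly int}} := 'X.

Definition weight_enum (R : finComNzRingType) (n : nat) (C : {set 'rV[R]_n})
  : {poly {poly int}} :=
  \sum_(i < n.+1) (#|[set v in C | hweight v == i]|)%:R * (PX ^+ (n - i) * PY ^+ i).

From HB Require Import structures.
From mathcomp Require Import all_boot all_order all_algebra.
From mathcomp Require Import zify ring.
Set Implicit Arguments. Unset Strict Implicit. Unset Printing Implicit Defensive.
Import GRing.Theory.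
Local Open Scope ring_scope.

(* The columns of G_k^alpha are the q^(sk) vectors of R^k, each exactly once, so
   the codeword u G_k^alpha has weight #{x in R^k | u x <> 0}.  If all coordinates
   of u lie in gamma^v R but not all in gamma^(v+1) R, one of them is gamma^v times
   a unit, so x |-> u x maps R^k onto gamma^v R, which has q^(s-v) elements; its
   kernel therefore has q^(s(k-1)+v) elements.  The layer (gamma^v R)^k minus
   (gamma^(v+1) R)^k has q^(k(s-v)) - q^(k(s-v-1)) elements, and u = 0 is the
   only codeword left over. *)


Lemma card_ker_mul_card_img (U V : finZmodType) (f : U -> V) :
  {morph f : x y / x - y} ->
  (#|[set x | f x == 0%R]| * #|[set f x | x : U]|)%N = #|U|.
Proof.
move=> fB; rewrite mulnC -sum_nat_const -[in RHS]sum1_card.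
rewrite [in RHS](partition_big_imset f) /=.
apply: eq_bigr => y /imsetP[x0 _ ->].
rewrite sum1dep_card -[LHS](card_imset _ (addIr x0)); apply: eq_card => x.
rewrite [in RHS]inE; apply/imsetP/eqP => [[z] | fx].
  by rewrite inE => z0 ->; apply/eqP; rewrite -subr_eq0 -fB addrK.
by exists (x - x0); rewrite ?subrK // inE fB fx subrr.
Qed.

Lemma card_rV_in (T : finType) (A : {set T}) k :
  #|[set u : 'rV[T]_k | [forall i, u 0 i \in A]]| = (#|A| ^ k)%N.
Proof.
pose f (h : {ffun 'I_k -> T}) : 'rV[T]_k := \row_i h i.
have f_inj : injective f.
  by move=> h h' /rowP eqf; apply/ffunP => i; have := eqf i; rewrite !mxE.
rewrite -[k in RHS]card_ord -(card_ffun_on _ A) -(card_imset _ f_inj).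
apply: eq_card => u; rewrite inE; apply/forallP/imsetP => [uA | [h /ffun_onP hA ->] i].
  exists [ffun i => u 0 i]; first by apply/ffun_onP => i; rewrite ffunE.
  by apply/rowP => i; rewrite !mxE ffunE.
by rewrite mxE.
Qed.

Lemma hweight_le (R : finComNzRingType) n (v : 'rV[R]_n) : (hweight v <= n)%N.
Proof. by rewrite -[n in (_ <= n)%N]card_ord max_card. Qed.

Lemma weight_enumE (R : finComNzRingType) n (C : {set 'rV[R]_n}) :
  weight_enum C = \sum_(v in C) PX ^+ (n - hweight v) * PY ^+ hweight v.
Proof.
rewrite /weight_enum (partition_big (fun v => inord (hweight v) : 'I_n.+1) predT) //=.
apply: eq_bigr => i _; rewrite mulr_natl -sumr_const; apply: congr_big => // v.
  by rewrite !inE -(inj_eq val_inj) /= inordK // ltnS hweight_le.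
by rewrite inE => /andP[_ /eqP ->].
Qed.

Lemma sum_layers (V : pzRingType) (P : nat -> bool) (a : nat -> V) (b x : V) n :
  P 0%N -> (forall j, P j.+1 -> P j) ->
  (forall j, (j < n)%N -> P j -> ~~ P j.+1 -> x = a j) -> (P n -> x = b) ->
  x = \sum_(j < n) ((P j)%:R - (P j.+1)%:R) * a j + (P n)%:R * b.
Proof.
move=> P0 PS Pa Pb.
have telescope : \sum_(j < n) ((P j)%:R - (P j.+1)%:R : V) = 1 - (P n)%:R.
  rewrite -(big_mkord xpredT (fun j => (P j)%:R - (P j.+1)%:R)).
  rewrite (telescope_sumr_eq (fun j => - (P j)%:R)) // => [|j _].
    by rewrite P0 opprK addrC.
  by rewrite opprK addrC.
transitivity (\sum_(j < n) ((P j)%:R - (P j.+1)%:R) * x + (P n)%:R * x).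
  by rewrite -mulr_suml telescope -mulrDl subrK mul1r.
congr (_ + _); last by case: (boolP (P n)) => [/Pb -> // | _]; rewrite !mul0r.
apply: eq_bigr => j _.
case: (boolP (P j.+1)) => [/PS -> | Pj1]; first by rewrite subrr !mul0r.
by case: (boolP (P j)) => [Pj | _]; rewrite ?subrr ?mul0r // (Pa j).
Qed.

Lemma hweight0 (R : finComNzRingType) n : hweight (0 : 'rV[R]_n) = 0%N.
Proof. by apply/eqP; rewrite cards_eq0; apply/eqP/setP => j; rewrite !inE mxE eqxx. Qed.

Lemma sumr_mem (V : pzSemiRingType) (T : finType) (A : {pred T}) :
  \sum_(x : T) ((x \in A)%:R : V) = #|A|%:R.
Proof. by rewrite -natr_sum -sum1_card [in RHS]big_mkcond. Qed.

Section FiniteChainRing.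
Variables (R : finComNzRingType) (g : R) (s q : nat) (e : nat -> R).
Hypothesis g_max : maximal_ideal (pideal g).
Hypothesis g_nil : g ^+ s = 0.
Hypothesis gX_neq0 : forall t, (t < s)%N -> g ^+ t != 0.
Hypothesis q_gt1 : (1 < q)%N.
Hypothesis e_residues : forall r : R, exists! i, (i < q)%N /\ r - e i \in pideal g.

Definition invertible (x : R) := exists y, x * y = 1.

Definition gX_ideal v : {set R} := [set g ^+ v * x | x : R].

Lemma pidealP x : reflect (exists r, x = r * g) (x \in pideal g).
Proof. by rewrite inE; apply: (iffP existsP) => [[r /eqP ->] | [r ->]]; exists r. Qed.

Lemma invertible_1_sub_mulg a : invertible (1 - a * g).
Proof.
exists (\sum_(i < s) (a * g) ^+ i).
by rewrite -opprB mulNr -subrX1 exprMn g_nil mulr0 sub0r opprK.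
Qed.

Lemma invertible_notin_pideal x : x \notin pideal g -> invertible x.
Proof.
move=> xNg; case: g_max => -[_ _ _] _ g_maximal.
pose J := [set a * g + b * x | a : R, b : R].
have J_ideal : is_ideal J.
  split.
  - by apply/imset2P; exists 0 0; rewrite ?inE // !mul0r addr0.
  - move=> _ _ /imset2P[a1 b1 _ _ ->] /imset2P[a2 b2 _ _ ->].
    by apply/imset2P; exists (a1 + a2) (b1 + b2); rewrite ?inE // !mulrDl addrACA.
  - move=> r _ /imset2P[a b _ _ ->].
    by apply/imset2P; exists (r * a) (r * b); rewrite ?inE // mulrDr !mulrA.
have gJ : pideal g \subset J.
  apply/subsetP => _ /pidealP[a ->].
  by apply/imset2P; exists a 0; rewrite ?inE // mul0r addr0.
have xJ : x \in J by apply/imset2P; exists 0 1; rewrite ?inE // mul0r add0r mul1r.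
have [J_g | J_T] := g_maximal J J_ideal gJ; first by rewrite -J_g xJ in xNg.
have /imset2P[a b _ _ one_ab] : 1 \in J by rewrite J_T inE.
have [c abc] := invertible_1_sub_mulg a.
by exists (b * c); rewrite mulrA (mulrC x) -abc one_ab addrAC subrr add0r.
Qed.

Lemma pideal_of_gX_cancel m x y :
  (m < s)%N -> g ^+ m * x = g ^+ m.+1 * y -> x \in pideal g.
Proof.
move=> m_lt_s gx; apply/negPn/negP => /invertible_notin_pideal[z xz].
have [c yzc] := invertible_1_sub_mulg (y * z).
have gm_yzg : g ^+ m * (1 - y * z * g) = 0.
  by rewrite mulrBr -{1}xz mulrA gx exprSr; ring.
have gm0 : g ^+ m = 0 by rewrite -[g ^+ m]mulr1 -yzc mulrA gm_yzg mul0r.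
by move: (gX_neq0 m_lt_s); rewrite gm0 eqxx.
Qed.

Lemma residue_inj d d' :
  (d < q)%N -> (d' < q)%N -> e d - e d' \in pideal g -> d = d'.
Proof.
move=> d_lt d'_lt dd'; have [i [_ i_uniq]] := e_residues (e d).
have dd : e d - e d \in pideal g by apply/pidealP; exists 0; rewrite subrr mul0r.
by rewrite -(i_uniq d (conj d_lt dd)) (i_uniq d' (conj d'_lt dd')).
Qed.

Lemma rhoS t c : rho g t.+1 q e c = e (c %% q)%N + g * rho g t q e (c %/ q)%N.
Proof.
rewrite /rho big_ord_recl /= expn0 divn1 expr0 mulr1 mulr_sumr; congr (_ + _).
by apply: eq_bigr => i _; rewrite /bump /= add1n expnS divnMA exprS mulrCA.
Qed.

Lemma rho_approx t r : exists2 c, (c < q ^ t)%N & r - rho g t q e c \in gX_ideal t.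
Proof.
elim: t r => [|t IHt] r.
  exists 0%N => //; apply/imsetP; exists r => //.
  by rewrite /rho big_ord0 subr0 expr0 mul1r.
have [d [[d_lt /pidealP[z rz]] _]] := e_residues r.
have [c c_lt /imsetP[y _ zy]] := IHt z.
exists (c * q + d)%N; first by rewrite expnS; nia.
apply/imsetP; exists y => //.
rewrite rhoS modnMDl modn_small // divnMDl ?(ltn_trans _ q_gt1) // divn_small // addn0.
by rewrite opprD addrA rz (mulrC z) -mulrBr zy exprS mulrA.
Qed.

Lemma rho_inj_gX t c c' : (t <= s)%N -> (c < q ^ t)%N -> (c' < q ^ t)%N ->
  g ^+ (s - t) * rho g t q e c = g ^+ (s - t) * rho g t q e c' -> c = c'.
Proof.
have q_gt0 : (0 < q)%N by apply: ltn_trans q_gt1.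
elim: t c c' => [|t IHt] c c' t_le_s; first by rewrite expn0 !ltnS !leqn0 => /eqP-> /eqP->.
rewrite expnS => c_lt c'_lt; rewrite !rhoS.
set m := (s - t.+1)%N => eq_m.
have digit_eq : (c %% q = c' %% q)%N.
  apply: residue_inj; rewrite ?ltn_pmod //.
  apply: (@pideal_of_gX_cancel m _ (rho g t q e (c' %/ q) - rho g t q e (c %/ q))).
    by rewrite /m; lia.
  apply/eqP; rewrite -subr_eq0 exprSr; apply/eqP.
  by transitivity (g ^+ m * (e (c %% q) + g * rho g t q e (c %/ q)) -
    g ^+ m * (e (c' %% q) + g * rho g t q e (c' %/ q))); [ring | rewrite eq_m subrr].
move: eq_m; rewrite digit_eq !mulrDr => /addrI; rewrite !mulrA -exprSr => high_eq.
have quot_eq : (c %/ q = c' %/ q)%N.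
  apply: IHt; rewrite ?ltn_divLR // 1?mulnC //; first exact: ltnW.
  by rewrite -subnSK.
by rewrite (divn_eq c q) (divn_eq c' q) quot_eq digit_eq.
Qed.

Lemma card_gX_ideal v : (v <= s)%N -> #|gX_ideal v| = (q ^ (s - v))%N.
Proof.
move=> v_le_s; pose f (c : 'I_(q ^ (s - v))) := g ^+ v * rho g (s - v) q e c.
have f_inj : injective f.
  move=> c c' fcc'; apply/val_inj/(@rho_inj_gX (s - v));
    by rewrite ?leq_subr ?ltn_ord ?subKn.
rewrite -[RHS]card_ord -(card_imset _ f_inj); apply: eq_card => x.
apply/imsetP/imsetP => [[r _ ->] | [c _ ->]]; last by exists (rho g (s - v) q e c).
have [c c_lt /imsetP[y _ ry]] := rho_approx (s - v) r.
exists (Ordinal c_lt) => //.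
rewrite /f -[r](subrK (rho g (s - v) q e c)) ry mulrDr mulrA -exprD subnKC //.
by rewrite g_nil mul0r add0r.
Qed.

Lemma card_ring : #|R| = (q ^ s)%N.
Proof.
rewrite -[s]subn0 -card_gX_ideal //; apply: eq_card => x.
by apply/esym/imsetP; exists x; rewrite ?expr0 ?mul1r.
Qed.

Lemma rho_inj c c' : (c < q ^ s)%N -> (c' < q ^ s)%N ->
  rho g s q e c = rho g s q e c' -> c = c'.
Proof. by move=> c_lt c'_lt rho_eq; apply: (rho_inj_gX (leqnn s)); rewrite ?rho_eq. Qed.

Lemma Gfun_inj k c c' : (0 < k)%N -> (c < q ^ (s * k))%N -> (c' < q ^ (s * k))%N ->
  (forall i, (i < k)%N -> Gfun g s q e k i c = Gfun g s q e k i c') -> c = c'.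
Proof.
case: k => // k _; elim: k c c' => [|k IHk] c c'.
  by rewrite muln1 => c_lt c'_lt /(_ 0%N isT); apply: rho_inj.
have Q_gt0 : (0 < q ^ (s * k.+1))%N by rewrite expn_gt0 (ltn_trans _ q_gt1).
rewrite [(s * k.+2)%N]mulnS expnD => c_lt c'_lt G_eq.
have hi : (c %/ q ^ (s * k.+1) = c' %/ q ^ (s * k.+1))%N.
  by apply: rho_inj; rewrite ?ltn_divLR //; apply: (G_eq 0%N).
have lo : (c %% q ^ (s * k.+1) = c' %% q ^ (s * k.+1))%N.
  by apply: IHk; rewrite ?ltn_pmod // => i i_lt; apply: (G_eq i.+1).
by rewrite (divn_eq c (q ^ (s * k.+1))) (divn_eq c' (q ^ (s * k.+1))) hi lo.
Qed.

Section SimplexCode.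
Variable k : nat.
Hypothesis k_gt0 : (0 < k)%N.
Local Notation G := (Gmat g s q e k).

Lemma col_Gmat_bij : bijective (fun c : 'I_(q ^ (s * k)) => col c G).
Proof.
apply: inj_card_bij; last by rewrite card_mx card_ring muln1 -expnM card_ord.
move=> c c' /colP G_eq; apply/val_inj/(Gfun_inj k_gt0); rewrite ?ltn_ord // => i i_lt.
by have := G_eq (Ordinal i_lt); rewrite !mxE.
Qed.

Lemma code_entry (u : 'rV_k) c : (u *m G) 0 c = (u *m col c G) 0 0.
Proof. by rewrite !mxE; apply: eq_bigr => i _; rewrite !mxE. Qed.

Lemma hweight_code (u : 'rV_k) :
  hweight (u *m G) = #|[set x : 'cV_k | (u *m x) 0 0 != 0]|.
Proof.
have [c_of colK c_ofK] := col_Gmat_bij.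
have c_inj : injective c_of by apply: can_inj c_ofK.
rewrite /hweight -(card_imset _ c_inj); apply: eq_card => c; rewrite inE code_entry.
apply/idP/imsetP => [uc | [x ux ->]]; last by rewrite inE in ux; rewrite c_ofK.
by exists (col c G); rewrite ?colK // inE.
Qed.

Lemma code_inj : injective (fun u : 'rV_k => u *m G).
Proof.
move=> u u' /= uG; apply/rowP => i.
have [c_of _ c_ofK] := col_Gmat_bij.
have entry (w : 'rV_k) : w 0 i = (w *m G) 0 (c_of (delta_mx i 0)).
  by rewrite code_entry c_ofK -colE mxE.
by rewrite !entry uG.
Qed.

Definition layer v : {set 'rV[R]_k} :=
  [set u : 'rV[R]_k | [forall i, u 0 i \in gX_ideal v]].

Lemma card_layer v : (v <= s)%N -> #|layer v| = (q ^ (k * (s - v)))%N.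
Proof. by move=> v_le_s; rewrite card_rV_in card_gX_ideal // -expnM mulnC. Qed.

Lemma layer0 u : u \in layer 0.
Proof.
by rewrite inE; apply/forallP => i; apply/imsetP; exists (u 0 i); rewrite ?expr0 ?mul1r.
Qed.

Lemma layerS v u : u \in layer v.+1 -> u \in layer v.
Proof.
rewrite !inE => /forallP uv; apply/forallP => i.
by have /imsetP[x _ ->] := uv i; apply/imsetP; exists (g * x); rewrite // exprSr mulrA.
Qed.

Lemma layer_s u : u \in layer s -> u = 0.
Proof.
rewrite inE => /forallP us; apply/rowP => i.
by have /imsetP[x _ ->] := us i; rewrite g_nil mul0r mxE.
Qed.

Lemma image_layer v u : (v < s)%N -> u \in layer v -> u \notin layer v.+1 ->
  [set (u *m x) 0 0 | x : 'cV_k] = gX_ideal v.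
Proof.
move=> v_lt_s uv uNv1.
have [t ut] : exists t : 'rV_k, u = g ^+ v *: t.
  have /fin_all_exists[t tP] : forall i, exists r, u 0 i = g ^+ v * r.
    by move=> i; move: uv; rewrite inE => /forallP /(_ i) /imsetP[r _ ->]; exists r.
  by exists (\row_i t i); apply/rowP => i; rewrite !mxE tP.
have [m tm] : exists m, t 0 m \notin pideal g.
  move: uNv1; rewrite inE negb_forall => /existsP[m um]; exists m.
  apply: contra um => /pidealP[r tmr]; apply/imsetP; exists r => //.
  by rewrite ut mxE tmr exprSr -mulrA (mulrC r).
have [w tw] := invertible_notin_pideal tm.
apply/setP => y; apply/imsetP/imsetP => [[x _ ->] | [r _ ->]].
  by exists ((t *m x) 0 0); rewrite // ut -scalemxAl mxE.
exists ((w * r) *: delta_mx m 0) => //.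
by rewrite -scalemxAr mxE -colE mxE ut mxE [RHS]mulrC -mulrA (mulrA (t 0 m)) tw mul1r.
Qed.

Lemma hweight_layer v u : (v < s)%N -> u \in layer v -> u \notin layer v.+1 ->
  hweight (u *m G) = (q ^ (s * k) - q ^ (s * (k - 1) + v))%N.
Proof.
move=> v_lt_s uv uNv1.
have card_cV : #|{: 'cV[R]_k}| = (q ^ (s * k))%N.
  by rewrite card_mx card_ring muln1 -expnM.
have card_ker : #|[set x : 'cV_k | (u *m x) 0 0 == 0]| = (q ^ (s * (k - 1) + v))%N.
  have entryB : {morph (fun x : 'cV_k => (u *m x) 0 0) : x y / x - y}.
    by move=> x y /=; rewrite mulmxBr !mxE.
  have := card_ker_mul_card_img entryB; rewrite /= (image_layer v_lt_s uv uNv1).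
  rewrite card_gX_ideal ?(ltnW v_lt_s) // card_mx card_ring muln1 -expnM => prod_eq.
  have qX_gt0 : (0 < q ^ (s - v))%N by rewrite expn_gt0 (ltn_trans _ q_gt1).
  apply/eqP; rewrite -(eqn_pmul2r qX_gt0) prod_eq -expnD.
  by rewrite -addnA (subnKC (ltnW v_lt_s)) subn1 -mulnSr prednK.
rewrite hweight_code -card_ker -card_cV.
rewrite -(cardsC [set x : 'cV_k | (u *m x) 0 0 == 0]) addKn.
by apply: eq_card => x; rewrite !inE.
Qed.

Lemma weight_enum_simplex_alpha :
  weight_enum (simplex_alpha g s q e k) =
    \sum_(j < s)
       ((q ^ (k * (s - j)) - q ^ (k * (s - j - 1)))%N)%:R
       * (PX ^+ (q ^ (s * k) - (q ^ (s * k) - q ^ (s * (k - 1) + j)))%N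
          * PY ^+ (q ^ (s * k) - q ^ (s * (k - 1) + j))%N)
    + PX ^+ (q ^ (s * k)).
Proof.
pose n := (q ^ (s * k))%N.
pose mono w := PX ^+ (n - w) * PY ^+ w.
have -> : simplex_alpha g s q e k = [set u *m G | u : 'rV_k].
  apply/setP => v; rewrite inE.
  by apply/existsP/imsetP => [[u /eqP ->] | [u _ ->]]; exists u.
rewrite weight_enumE big_imset /=; last by move=> u u' _ _; apply: code_inj.
rewrite (eq_bigr (fun u => \sum_(j < s) (((u \in layer j)%:R - (u \in layer j.+1)%:R)
    * mono (n - q ^ (s * (k - 1) + j))%N) + (u \in layer s)%:R * PX ^+ n)); last first.
  move=> u _; apply: (sum_layers (P := fun j => u \in layer j)
    (a := fun j => mono (n - q ^ (s * (k - 1) + j))%N)) => [|j|j j_lt uj uNj1|/layer_s ->].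
  - exact: layer0.
  - exact: layerS.
  - by rewrite (hweight_layer j_lt uj uNj1).
  - by rewrite mul0mx hweight0 subn0 expr0 mulr1.
rewrite big_split /= exchange_big -mulr_suml sumr_mem card_layer // subnn muln0 expn0 mul1r.
congr (_ + _); apply: eq_bigr => j _.
rewrite -mulr_suml sumrB !sumr_mem.
rewrite (card_layer (ltnW (ltn_ord j))) (card_layer (ltn_ord j)) -natrB; last first.
  by rewrite leq_pexp2l ?(ltnW q_gt1) // leq_mul2l leq_sub2l ?orbT.
by rewrite -subnDA addn1.
Qed.

End SimplexCode.

End FiniteChainRing.

Theorem theorem3p13 (R : finComNzRingType) (gamma : R) (s q : nat)
  (e : nat -> R) (k : nat) :
  chain_ring R ->
  maximal_ideal (pideal gamma) ->
  (0 < s)%N ->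
  gamma ^+ s = 0 ->
  (forall t, (t < s)%N -> gamma ^+ t != 0) ->
  (1 < q)%N -> e 0%N = 0 -> e 1%N = 1 ->
  (forall r : R, exists! i, (i < q)%N /\ r - e i \in pideal gamma) ->
  (1 <= k)%N ->
  weight_enum (simplex_alpha gamma s q e k) =
    \sum_(j < s)
       ((q ^ (k * (s - j)) - q ^ (k * (s - j - 1)))%N)%:R
       * (PX ^+ (q ^ (s * k) - (q ^ (s * k) - q ^ (s * (k - 1) + j)))%N
          * PY ^+ (q ^ (s * k) - q ^ (s * (k - 1) + j))%N)
    + PX ^+ (q ^ (s * k)).
Proof.
move=> _ g_max _ g_nil gX_neq0 q_gt1 _ _ e_residues k_gt0.
exact: weight_enum_simplex_alpha.
Qed.
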